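(* Let $p(y,z|x)$ be a discrete memoryless broadcast channel with input alphabet $\mathcal{X}=\{0,1,\dots,m-1\}$. Let $U,V,X$ be random variables with $U,V$ on finite sets $\mathcal{U},\mathcal{V}$ and $X$ on $\mathcal{X}$, and let $(Y,Z)$ be obtained from $X$ through the channel, so that $(U,V)\to X\to(Y,Z)$ is a Markov chain. Define $U^*$ on $\mathcal{U}\times\{0,\dots,m-1\}$, $V^*$ on $\mathcal{V}\times\{0,\dots,m-1\}$, $X^*$ on $\mathcal{X}$ (writing $u_i=(u,i)$, $v_j=(v,j)$) by $P(U^*=u_i,V^*=v_j)=\frac1m P(U=u,V=v,X=(i-j)_m)$ and $X^*=(i-j)_m$ when $(U^*,V^* )=(u_i,v_j)$, where $(l)_m$ is the remainder of $l$ modulo $m$; and let $(Y^*,Z^* )$ be obtained from $X^*$ through the same channel, so $(U^*,V^* )\to X^*\to(Y^*,Z^* )$ is a Markov chain with $p(y^*,z^*|x^* )=p(y,z|x)$. Then: (i) $P(X^*=i)=P(X=i)$ for $0\le i\le m-1$; (ii) $H(Y^*|U^* )=H(Y|U)$; (iii) $H(Z^*|U^* )=H(Z|U)$; (iv) $H(Y^*|V^* )=H(Y|V)$; (v) $H(Z^*|V^* )=H(Z|V)$; (vi) $H(Y^*|U^*,V^* )=H(Y^*|X^* )=H(Y|X)\le H(Y|U,V)$; (vii) $H(Z^*|U^*,V^* )=H(Z^*|X^* )=H(Z|X)\le H(Z|U,V)$. *)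

From HB Require Import structures.
From mathcomp Require Import all_boot all_order all_algebra.
From mathcomp Require Import all_classical all_reals all_analysis.
Set Implicit Arguments. Unset Strict Implicit. Unset Printing Implicit Defensive.
Import Order.TTheory GRing.Theory Num.Theory.
Local Open Scope ring_scope.

Section Defs.
Variable R : realType.

Definition prob (Om : finType) (P : Om -> R) (E : pred Om) : R :=
  \sum_(w | E w) P w.

Definition condH (Om : finType) (P : Om -> R) (TA TB : finType)
    (A : Om -> TA) (B : Om -> TB) : R :=
  - \sum_(a : TA) \sum_(b : TB)
      let pab := prob P (fun w => (A w == a) && (B w == b)) in
      if pab == 0 then 0
      else pab * ln (pab / prob P (fun w => B w == b)).

Definition subm (m : nat) (i j : 'I_m) : 'I_m :=
  Ordinal (ltn_pmod (i + m - j) (leq_ltn_trans (leq0n i) (ltn_ord i))).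

Definition orig_pmf (U V Y Z : finType) (m : nat)
    (pUVX : U -> V -> 'I_m -> R) (W : 'I_m -> Y -> Z -> R)
    (w : U * V * 'I_m * Y * Z) : R :=
  match w with (u, v, x, y, z) => pUVX u v x * W x y z end.

(* Starred sample space: (Us,Vs,Xs,Ys,Zs) with Us = (u,i), Vs = (v,j),
   P(Us=u_i,Vs=v_j) = 1/m P(U=u,V=v,X=(i-j)_m), Xs = (i-j)_m, and
   (Ys,Zs) drawn from Xs through the same channel W. *)
Definition star_pmf (U V Y Z : finType) (m : nat)
    (pUVX : U -> V -> 'I_m -> R) (W : 'I_m -> Y -> Z -> R)
    (w : (U * 'I_m) * (V * 'I_m) * 'I_m * Y * Z) : R :=
  match w with ((u, i), (v, j), x, y, z) =>
  (m%:R)^-1 * pUVX u v (subm i j) * (if x == subm i j then 1 else 0) * W x y z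
  end.

End Defs.

From HB Require Import structures.
From mathcomp Require Import all_boot all_order all_algebra.
From mathcomp Require Import all_classical all_reals all_analysis.
Import Order.TTheory GRing.Theory Num.Theory.
Set Implicit Arguments. Unset Strict Implicit.
Local Open Scope ring_scope.

(* Write U', V', X' for the starred variables.  They arise from (U,V,X) by
   drawing J uniformly on {0,..,m-1}, independently of everything, and setting
   U' = (U, (X+J)_m), V' = (V, J).  Each extra coordinate alone is uniform and
   independent of (U,V,X,Y,Z), so conditioning on U' (resp. V') is
   conditioning on U (resp. V).  Jointly, (U',V') determines X' = (i-j)_m,
   whose law is that of X; by the Markov property H(T'|U',V') = H(T'|X') =
   H(T|X) for any function T of the channel output.  Finally
   H(T|X) <= H(T|U,V) is the concavity of entropy along (U,V) -> X -> T. *)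

Section PairSums.
Variable M : nmodType.

Lemma sum_pair (A B : finType) (F : A * B -> M) :
  \sum_p F p = \sum_a \sum_b F (a, b).
Proof. by rewrite pair_bigA; apply: eq_bigr => -[]. Qed.

Lemma sum_pair_fst (A B : finType) (a : A) (F : A * B -> M) :
  \sum_(p | p.1 == a) F p = \sum_b F (a, b).
Proof.
rewrite big_mkcond sum_pair (bigD1 a) //= [X in _ + X]big1 => [|a' /negbTE a'a].
  by rewrite addr0; apply: eq_bigr => b _; rewrite eqxx.
by apply: big1 => b _; rewrite a'a.
Qed.

Lemma sum_pair_snd (A B : finType) (b : B) (F : A * B -> M) :
  \sum_(p | p.2 == b) F p = \sum_a F (a, b).
Proof.
rewrite big_mkcond sum_pair; apply: eq_bigr => a _.
by rewrite (bigD1 b) //= eqxx big1 ?addr0 // => b' /negbTE ->.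
Qed.

End PairSums.

Section CondEntropy.
Variable R : realType.

Definition entropy (T : finType) (p : T -> R) : R := - \sum_t p t * ln (p t).

Definition joint_condH (TA TB : finType) (J : TA -> TB -> R) : R :=
  - \sum_a \sum_b J a b * ln (J a b / \sum_a' J a' b).

Lemma prob_marginal (Om TA TB : finType) (P : Om -> R)
    (A : Om -> TA) (B : Om -> TB) b :
  prob P (fun w => B w == b) =
  \sum_a prob P (fun w => (A w == a) && (B w == b)).
Proof.
rewrite /prob (partition_big A xpredT) //=; apply: eq_bigr => a _.
by apply: eq_bigl => w; rewrite andbC.
Qed.

Lemma condH_joint (Om TA TB : finType) (P : Om -> R)
    (A : Om -> TA) (B : Om -> TB) :
  condH P A B = joint_condH (fun a b => prob P (fun w => (A w == a) && (B w == b))).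
Proof.
rewrite /condH /joint_condH; congr (- _).
apply: eq_bigr => a _; apply: eq_bigr => b _ /=.
by rewrite (prob_marginal P A B b); case: eqP => [->|]; rewrite ?mul0r.
Qed.

Lemma sum_ord_invm (m : nat) (c : R) : (0 < m)%N -> \sum_(i < m) m%:R^-1 * c = c.
Proof.
move=> m_gt0; rewrite sumr_const card_ord -mulrnAl -mulr_natr mulVf ?mul1r //.
by rewrite pnatr_eq0 -lt0n.
Qed.

Lemma joint_condH_uniform_pair (TA TB : finType) (m : nat)
    (J : TA -> TB -> R) (J' : TA -> TB * 'I_m -> R) :
  (0 < m)%N -> (forall a b i, J' a (b, i) = m%:R^-1 * J a b) ->
  joint_condH J' = joint_condH J.
Proof.
move=> m_gt0 J'E; rewrite /joint_condH; congr (- _); apply: eq_bigr => a _.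
rewrite sum_pair; apply: eq_bigr => b _.
rewrite -[RHS](sum_ord_invm _ m_gt0); apply: eq_bigr => i _.
rewrite J'E (eq_bigr _ (fun a' _ => J'E a' b i)) -mulr_sumr -mulrA.
have m_neq0 : (m%:R : R) != 0 by rewrite pnatr_eq0 -lt0n.
by rewrite invfM mulrACA invrK mulVf ?mul1r // invr_eq0.
Qed.

Lemma joint_condH_kernel (X T B : finType) (K : X -> T -> R)
    (k : B -> R) (phi : B -> X) :
  (forall x, \sum_t K x t = 1) ->
  joint_condH (fun t b => k b * K (phi b) t) =
  \sum_x (\sum_(b | phi b == x) k b) * entropy (K x).
Proof.
move=> K1; rewrite /joint_condH /entropy.
have cell t b : k b * K (phi b) t * ln (k b * K (phi b) t / \sum_t' k b * K (phi b) t')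
    = k b * (K (phi b) t * ln (K (phi b) t)).
  rewrite -mulr_sumr K1 mulr1; have [->|kb_neq0] := eqVneq (k b) 0; first by rewrite !mul0r.
  by rewrite [k b * _]mulrC mulfK // mulrAC mulrC.
rewrite (eq_bigr _ (fun t _ => eq_bigr _ (fun b _ => cell t b))) exchange_big /=.
rewrite (partition_big phi xpredT) //= -sumrN; apply: eq_bigr => x _.
rewrite mulrN big_distrl /=; congr (- _); apply: eq_bigr => b /eqP <-.
by rewrite mulr_sumr.
Qed.

Lemma ln_le_subr1 (x : R) : 0 < x -> ln x <= x - 1.
Proof.
move=> x_gt0; have := @le_ln1Dx R (x - 1).
by rewrite addrCA subrr addr0; apply; rewrite ltrBrDr addNr.
Qed.

(* Tangent-line inequality for x ln x; at w = 0 it holds whatever ln 0 is. *)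
Lemma mul_ln_ratio_le (w c : R) : 0 <= w -> 0 < c -> w * ln c - w * ln w <= c - w.
Proof.
rewrite le_eqVlt => /predU1P[<- c_gt0|w_gt0 c_gt0]; first by rewrite !mul0r subrr subr0 ltW.
rewrite -mulrBr -ln_div ?posrE //; apply: le_trans (_ : w * (c / w - 1) <= _).
  by rewrite ler_wpM2l ?(ltW w_gt0) // ln_le_subr1 // divr_gt0.
by rewrite mulrBr mulr1 mulrCA divff ?mulr1 // gt_eqF.
Qed.

Lemma xlnx_jensen (I : finType) (p w : I -> R) :
  (forall i, 0 <= p i) -> (forall i, 0 <= w i) ->
  (\sum_i p i * w i) * ln ((\sum_i p i * w i) / \sum_i p i)
    <= \sum_i p i * (w i * ln (w i)).
Proof.
move=> p_ge0 w_ge0; set A := \sum_i _ * _; set B := \sum_i p i.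
have pw_ge0 i : 0 <= p i * w i by rewrite mulr_ge0.
have [A0|A_neq0] := eqVneq A 0.
  have pw0 := psumr_eq0P (fun i _ => pw_ge0 i) A0.
  by rewrite A0 mul0r big1 // => i _; rewrite mulrA pw0 ?mul0r.
have A_gt0 : 0 < A by rewrite lt_def A_neq0 sumr_ge0.
have B_gt0 : 0 < B.
  rewrite lt_def sumr_ge0 // andbT; apply: contra_neq A_neq0 => B0.
  by rewrite /A big1 // => i _; rewrite (psumr_eq0P (fun i _ => p_ge0 i) B0) ?mul0r.
rewrite -subr_le0 {1}/A mulr_suml -sumrB.
apply: le_trans (_ : \sum_i p i * (A / B - w i) <= 0).
  apply: ler_sum => i _; rewrite -mulrA -mulrBr ler_wpM2l //.
  by rewrite mul_ln_ratio_le ?divr_gt0.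
under eq_bigr do rewrite mulrBr.
by rewrite sumrB -mulr_suml -/A -/B mulrC divfK ?gt_eqF // subrr.
Qed.

Lemma joint_condH_mixture_ge (X T B : finType) (K : X -> T -> R) (q : B -> X -> R) :
  (forall x t, 0 <= K x t) -> (forall x, \sum_t K x t = 1) ->
  (forall b x, 0 <= q b x) ->
  \sum_x (\sum_b q b x) * entropy (K x) <=
  joint_condH (fun t b => \sum_x q b x * K x t).
Proof.
move=> K_ge0 K1 q_ge0.
have mixE : - \sum_t \sum_b \sum_x q b x * (K x t * ln (K x t)) =
    \sum_x (\sum_b q b x) * entropy (K x).
  rewrite exchange_big; under eq_bigr do rewrite exchange_big.
  rewrite exchange_big -sumrN; apply: eq_bigr => x _.
  rewrite /entropy mulrN mulr_suml; congr (- _); apply: eq_bigr => b _.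
  by rewrite mulr_sumr.
rewrite -mixE /joint_condH lerN2; apply: ler_sum => t _; apply: ler_sum => b _.
have -> : \sum_t' \sum_x q b x * K x t' = \sum_x q b x.
  by rewrite exchange_big; apply: eq_bigr => x _; rewrite -mulr_sumr K1 mulr1.
exact: xlnx_jensen.
Qed.

End CondEntropy.

Section Channel.
Variable R : realType.
Variables (A1 A2 X Y Z : finType).
Variable q : A1 * A2 -> X -> R.
Variable W : X -> Y -> Z -> R.
Hypothesis W_ge0 : forall x y z, 0 <= W x y z.
Hypothesis W_sum1 : forall x, \sum_y \sum_z W x y z = 1.

(* Both the original and the starred sample spaces have this shape: a message
   a = (a1, a2), the channel input x, and the channel outputs (y, z). *)
Definition chan_pmf (w : A1 * A2 * X * Y * Z) : R :=
  q w.1.1.1 w.1.1.2 * W w.1.1.2 w.1.2 w.2.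

Definition out_law (T : finType) (f : Y * Z -> T) (x : X) (t : T) : R :=
  \sum_y \sum_z W x y z * (f (y, z) == t)%:R.

Lemma out_law_ge0 (T : finType) (f : Y * Z -> T) x t : 0 <= out_law f x t.
Proof. by apply: sumr_ge0 => y _; apply: sumr_ge0 => z _; rewrite mulr_ge0. Qed.

Lemma out_law_sum1 (T : finType) (f : Y * Z -> T) x : \sum_t out_law f x t = 1.
Proof.
rewrite /out_law exchange_big -[RHS](W_sum1 x); apply: eq_bigr => y _.
rewrite exchange_big; apply: eq_bigr => z _ /=.
rewrite (bigD1 (f (y, z))) //= eqxx mulr1 big1 ?addr0 // => t.
by rewrite eq_sym => /negbTE ->; rewrite mulr0.
Qed.

Lemma prob_chan_pmf (T : finType) (f : Y * Z -> T) t (E : A1 * A2 -> X -> bool) :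
  prob chan_pmf (fun w => (f (w.1.2, w.2) == t) && E w.1.1.1 w.1.1.2) =
  \sum_a \sum_(x | E a x) q a x * out_law f x t.
Proof.
rewrite /prob big_mkcond 3!sum_pair; apply: eq_bigr => a _.
rewrite [RHS]big_mkcond; apply: eq_bigr => x _ /=.
case: (E a x); last by apply: big1 => y _; apply: big1 => z _; rewrite andbF.
rewrite mulr_sumr; apply: eq_bigr => y _; rewrite mulr_sumr; apply: eq_bigr => z _.
by rewrite andbT mulrA; case: eqP; rewrite ?mulr1 ?mulr0.
Qed.

Lemma prob_chan_input_joint (T : finType) (f : Y * Z -> T) t x :
  prob chan_pmf (fun w => (f (w.1.2, w.2) == t) && (w.1.1.2 == x)) =
  (\sum_a q a x) * out_law f x t.
Proof.
rewrite (prob_chan_pmf f t (fun _ x' => x' == x)) mulr_suml.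
by apply: eq_bigr => a _; rewrite big_pred1_eq.
Qed.

Lemma prob_chan_input x : prob chan_pmf (fun w => w.1.1.2 == x) = \sum_a q a x.
Proof.
rewrite (prob_marginal _ (fun w => (w.1.2, w.2))).
transitivity (\sum_t (\sum_a q a x) * out_law id x t).
  by apply: eq_bigr => t _; exact: (prob_chan_input_joint id).
by rewrite -mulr_sumr out_law_sum1 mulr1.
Qed.

Lemma condH_chan_msg (B T : finType) (h : A1 * A2 -> B) (f : Y * Z -> T) :
  condH chan_pmf (fun w => f (w.1.2, w.2)) (fun w => h w.1.1.1) =
  joint_condH (fun t b => \sum_(a | h a == b) \sum_x q a x * out_law f x t).
Proof.
rewrite condH_joint; congr joint_condH; apply/funext => t; apply/funext => b.
rewrite (prob_chan_pmf f t (fun a _ => h a == b)) [RHS]big_mkcond.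
by apply: eq_bigr => a _; case: (h a == b) => //; rewrite big_pred0.
Qed.

Lemma condH_chan_pair (T : finType) (f : Y * Z -> T) :
  condH chan_pmf (fun w => f (w.1.2, w.2)) (fun w => (w.1.1.1.1, w.1.1.1.2)) =
  joint_condH (fun t a => \sum_x q a x * out_law f x t).
Proof.
rewrite (condH_chan_msg (fun a => (a.1, a.2))); congr joint_condH.
apply/funext => t; apply/funext => a.
by rewrite (eq_bigl (pred1 a)) ?big_pred1_eq // => a'; rewrite -surjective_pairing.
Qed.

Lemma condH_chan_input (T : finType) (f : Y * Z -> T) :
  condH chan_pmf (fun w => f (w.1.2, w.2)) (fun w => w.1.1.2) =
  \sum_x (\sum_a q a x) * entropy (out_law f x).
Proof.
rewrite condH_joint.
transitivity (joint_condH (fun t x => (\sum_a q a x) * out_law f x t)).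
  by congr joint_condH; apply/funext => t; apply/funext => x; rewrite prob_chan_input_joint.
rewrite (joint_condH_kernel _ id); last exact: out_law_sum1.
by apply: eq_bigr => x _; rewrite big_pred1_eq.
Qed.

Hypothesis q_ge0 : forall a x, 0 <= q a x.

Lemma condH_chan_input_le_pair (T : finType) (f : Y * Z -> T) :
  condH chan_pmf (fun w => f (w.1.2, w.2)) (fun w => w.1.1.2) <=
  condH chan_pmf (fun w => f (w.1.2, w.2)) (fun w => (w.1.1.1.1, w.1.1.1.2)).
Proof.
rewrite condH_chan_input condH_chan_pair.
by apply: joint_condH_mixture_ge => //; [exact: out_law_ge0 | exact: out_law_sum1].
Qed.

End Channel.

Section Subm.
Variable m : nat.

Lemma subm_addK (i j : 'I_m) : ((subm i j + j) %% m = i)%N.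
Proof.
rewrite /= modnDml subnK; last by rewrite (leq_trans (ltnW (ltn_ord j))) ?leq_addl.
by rewrite modnDr modn_small.
Qed.

Lemma subm_inj_r (i : 'I_m) : injective (subm i).
Proof.
move=> j j' eq_s; apply: ord_inj => /=.
rewrite -(modn_small (ltn_ord j)) -(modn_small (ltn_ord j')); apply/eqP.
by rewrite -(eqn_modDl (subm i j)) subm_addK eq_s subm_addK.
Qed.

Lemma subm_inj_l (j : 'I_m) : injective (fun i => subm i j).
Proof. by move=> i i' /= eq_s; apply: ord_inj; rewrite -(subm_addK i j) eq_s subm_addK. Qed.

Lemma sum_subm_r (M : nmodType) (i : 'I_m) (F : 'I_m -> M) :
  \sum_j F (subm i j) = \sum_x F x.
Proof. by rewrite [RHS](reindex_inj (@subm_inj_r i)). Qed.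

Lemma sum_subm_l (M : nmodType) (j : 'I_m) (F : 'I_m -> M) :
  \sum_i F (subm i j) = \sum_x F x.
Proof. by rewrite [RHS](reindex_inj (@subm_inj_l j)). Qed.

End Subm.

Section Star.
Variable R : realType.
Variables (m : nat) (U V : finType) (p : U -> V -> 'I_m -> R).

Definition orig_q (a : U * V) (x : 'I_m) : R := p a.1 a.2 x.

(* The message a = ((u, i), (v, j)) encodes (u_i, v_j). *)
Definition star_input (a : (U * 'I_m) * (V * 'I_m)) : 'I_m := subm a.1.2 a.2.2.

Definition star_weight (a : (U * 'I_m) * (V * 'I_m)) : R :=
  m%:R^-1 * p a.1.1 a.2.1 (star_input a).

Definition star_q (a : (U * 'I_m) * (V * 'I_m)) (x : 'I_m) : R :=
  star_weight a * (if x == star_input a then 1 else 0).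

Lemma orig_pmfE (Y Z : finType) (W : 'I_m -> Y -> Z -> R) :
  orig_pmf p W = chan_pmf orig_q W.
Proof. by apply/funext => -[[[[u v] x] y] z]. Qed.

Lemma star_pmfE (Y Z : finType) (W : 'I_m -> Y -> Z -> R) :
  star_pmf p W = chan_pmf star_q W.
Proof. by apply/funext => -[[[[[u i] [v j]] x] y] z]. Qed.

Lemma sum_star_q a (G : 'I_m -> R) :
  \sum_x star_q a x * G x = star_weight a * G (star_input a).
Proof.
rewrite /star_q (bigD1 (star_input a)) //= eqxx mulr1 big1 ?addr0 // => x /negbTE ->.
by rewrite mulr0 mul0r.
Qed.

Lemma star_q_marginal x :
  \sum_a star_q a x = \sum_(a | star_input a == x) star_weight a.
Proof.
rewrite [RHS]big_mkcond; apply: eq_bigr => a _.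
by rewrite /star_q eq_sym; case: eqP; rewrite ?mulr1 ?mulr0.
Qed.

Lemma star_weight_marginal x :
  \sum_(a | star_input a == x) star_weight a = \sum_a orig_q a x.
Proof.
have m_gt0 : (0 < m)%N := leq_ltn_trans (leq0n x) (ltn_ord x).
rewrite big_mkcond !sum_pair /=; apply: eq_bigr => u _.
under eq_bigr do rewrite sum_pair.
rewrite exchange_big /=; apply: eq_bigr => v _.
rewrite -[RHS](sum_ord_invm _ m_gt0); apply: eq_bigr => i _.
rewrite /star_weight /star_input /=.
rewrite (sum_subm_r i (fun x' => if x' == x then m%:R^-1 * p u v x' else 0)).
by rewrite -big_mkcond big_pred1_eq.
Qed.

Lemma star_msg_fst (G : 'I_m -> R) u i :
  \sum_(a | a.1 == (u, i)) \sum_x star_q a x * G x =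
  m%:R^-1 * \sum_(a | a.1 == u) \sum_x orig_q a x * G x.
Proof.
rewrite !sum_pair_fst mulr_sumr sum_pair; apply: eq_bigr => v _.
under eq_bigr do rewrite sum_star_q.
rewrite /star_weight /star_input /= (sum_subm_r i (fun x => m%:R^-1 * p u v x * G x)).
by rewrite mulr_sumr; apply: eq_bigr => x _; rewrite mulrA.
Qed.

Lemma star_msg_snd (G : 'I_m -> R) v j :
  \sum_(a | a.2 == (v, j)) \sum_x star_q a x * G x =
  m%:R^-1 * \sum_(a | a.2 == v) \sum_x orig_q a x * G x.
Proof.
rewrite !sum_pair_snd mulr_sumr sum_pair; apply: eq_bigr => u _.
under eq_bigr do rewrite sum_star_q.
rewrite /star_weight /star_input /= (sum_subm_l j (fun x => m%:R^-1 * p u v x * G x)).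
by rewrite mulr_sumr; apply: eq_bigr => x _; rewrite mulrA.
Qed.

Variables (Y Z : finType) (W : 'I_m -> Y -> Z -> R).
Hypothesis W_sum1 : forall x, \sum_y \sum_z W x y z = 1.

Lemma prob_star_input x :
  prob (star_pmf p W) (fun w => w.1.1.2 == x) =
  prob (orig_pmf p W) (fun w => w.1.1.2 == x).
Proof.
rewrite star_pmfE orig_pmfE !(prob_chan_input _ W_sum1).
by rewrite star_q_marginal star_weight_marginal.
Qed.

Lemma condH_star_input (T : finType) (f : Y * Z -> T) :
  condH (star_pmf p W) (fun w => f (w.1.2, w.2)) (fun w => w.1.1.2) =
  condH (orig_pmf p W) (fun w => f (w.1.2, w.2)) (fun w => w.1.1.2).
Proof.
rewrite star_pmfE orig_pmfE !(condH_chan_input _ W_sum1).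
by apply: eq_bigr => x _; rewrite star_q_marginal star_weight_marginal.
Qed.

Lemma condH_star_pair (T : finType) (f : Y * Z -> T) :
  condH (star_pmf p W) (fun w => f (w.1.2, w.2)) (fun w => (w.1.1.1.1, w.1.1.1.2)) =
  condH (star_pmf p W) (fun w => f (w.1.2, w.2)) (fun w => w.1.1.2).
Proof.
rewrite star_pmfE condH_chan_pair (condH_chan_input _ W_sum1).
transitivity (joint_condH (fun t a => star_weight a * out_law W f (star_input a) t)).
  by congr joint_condH; apply/funext => t; apply/funext => a; rewrite sum_star_q.
rewrite joint_condH_kernel; last exact: out_law_sum1.
by apply: eq_bigr => x _; rewrite star_q_marginal.
Qed.

Hypothesis W_ge0 : forall x y z, 0 <= W x y z.
Hypothesis p_ge0 : forall u v x, 0 <= p u v x.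

Lemma condH_orig_input_le_pair (T : finType) (f : Y * Z -> T) :
  condH (orig_pmf p W) (fun w => f (w.1.2, w.2)) (fun w => w.1.1.2) <=
  condH (orig_pmf p W) (fun w => f (w.1.2, w.2)) (fun w => (w.1.1.1.1, w.1.1.1.2)).
Proof. by rewrite orig_pmfE; apply: condH_chan_input_le_pair => // a x; apply: p_ge0. Qed.

Hypothesis m_gt0 : (0 < m)%N.

Lemma condH_star_fst (T : finType) (f : Y * Z -> T) :
  condH (star_pmf p W) (fun w => f (w.1.2, w.2)) (fun w => w.1.1.1.1) =
  condH (orig_pmf p W) (fun w => f (w.1.2, w.2)) (fun w => w.1.1.1.1).
Proof.
rewrite star_pmfE orig_pmfE !condH_chan_msg.
by apply: joint_condH_uniform_pair => // t u i; rewrite star_msg_fst.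
Qed.

Lemma condH_star_snd (T : finType) (f : Y * Z -> T) :
  condH (star_pmf p W) (fun w => f (w.1.2, w.2)) (fun w => w.1.1.1.2) =
  condH (orig_pmf p W) (fun w => f (w.1.2, w.2)) (fun w => w.1.1.1.2).
Proof.
rewrite star_pmfE orig_pmfE !condH_chan_msg.
by apply: joint_condH_uniform_pair => // t v j; rewrite star_msg_snd.
Qed.

End Star.

Unset Implicit Arguments.

Theorem corollary3p4 (R : realType) (m : nat) (U V Y Z : finType)
    (W : 'I_m -> Y -> Z -> R)
    (W_ge0 : forall x y z, 0 <= W x y z)
    (W_sum1 : forall x, \sum_(y : Y) \sum_(z : Z) W x y z = 1)
    (pUVX : U -> V -> 'I_m -> R)
    (p_ge0 : forall u v x, 0 <= pUVX u v x)
    (p_sum1 : \sum_(u : U) \sum_(v : V) \sum_(x : 'I_m) pUVX u v x = 1) :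
  let P := orig_pmf pUVX W in
  let Ps := star_pmf pUVX W in
  let RU := fun w : U * V * 'I_m * Y * Z => w.1.1.1.1 in
  let RV := fun w : U * V * 'I_m * Y * Z => w.1.1.1.2 in
  let RX := fun w : U * V * 'I_m * Y * Z => w.1.1.2 in
  let RY := fun w : U * V * 'I_m * Y * Z => w.1.2 in
  let RZ := fun w : U * V * 'I_m * Y * Z => w.2 in
  let RUs := fun w : (U * 'I_m) * (V * 'I_m) * 'I_m * Y * Z => w.1.1.1.1 in
  let RVs := fun w : (U * 'I_m) * (V * 'I_m) * 'I_m * Y * Z => w.1.1.1.2 in
  let RXs := fun w : (U * 'I_m) * (V * 'I_m) * 'I_m * Y * Z => w.1.1.2 in
  let RYs := fun w : (U * 'I_m) * (V * 'I_m) * 'I_m * Y * Z => w.1.2 in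
  let RZs := fun w : (U * 'I_m) * (V * 'I_m) * 'I_m * Y * Z => w.2 in
  (* (i) *)
  (forall i : 'I_m, prob Ps (fun w => RXs w == i) = prob P (fun w => RX w == i)) /\
  (* (ii) - (v) *)
  condH Ps RYs RUs = condH P RY RU /\
  condH Ps RZs RUs = condH P RZ RU /\
  condH Ps RYs RVs = condH P RY RV /\
  condH Ps RZs RVs = condH P RZ RV /\
  (* (vi) *)
  (condH Ps RYs (fun w => (RUs w, RVs w)) = condH Ps RYs RXs /\
   condH Ps RYs RXs = condH P RY RX /\
   condH P RY RX <= condH P RY (fun w => (RU w, RV w))) /\
  (* (vii) *)
  (condH Ps RZs (fun w => (RUs w, RVs w)) = condH Ps RZs RXs /\
   condH Ps RZs RXs = condH P RZ RX /\
   condH P RZ RX <= condH P RZ (fun w => (RU w, RV w))).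
Proof.
have m_gt0 : (0 < m)%N.
  case: (posnP m) => [m0|//]; move: p_sum1; rewrite big1 => [/esym/eqP|u _].
    by rewrite oner_eq0.
  by rewrite big1 // => v _; rewrite big1 // => x; have := leq_trans (ltn_ord x) (eq_leq m0).
cbv beta zeta.
split; first exact: prob_star_input.
split; first exact: (condH_star_fst pUVX W m_gt0 fst).
split; first exact: (condH_star_fst pUVX W m_gt0 snd).
split; first exact: (condH_star_snd pUVX W m_gt0 fst).
split; first exact: (condH_star_snd pUVX W m_gt0 snd).
split; split.
- exact: (condH_star_pair pUVX W_sum1 fst).
- split; first exact: (condH_star_input pUVX W_sum1 fst).
  exact: (condH_orig_input_le_pair W_sum1 W_ge0 p_ge0 fst).
- exact: (condH_star_pair pUVX W_sum1 snd).
- split; first exact: (condH_star_input pUVX W_sum1 snd).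
  exact: (condH_orig_input_le_pair W_sum1 W_ge0 p_ge0 snd).
Qed.
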